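(* Let $n\ge2$, let $\lambda_1\ge\dots\ge\lambda_n$ be real, and let $\mu_1\ge\dots\ge\mu_{n-1}$ be the critical points (with multiplicity) of $q(x)=\prod_{j=1}^n(x-\lambda_j)$. Then for every $r$ with $1\le r\le n-1$, $$(n-1)\sum_{j=1}^r\lambda_{j+1}+r\lambda_1\le n\sum_{j=1}^r\mu_j\le(n-1)\sum_{j=1}^r\lambda_j+r\lambda_{r+1}.$$ *)

From mathcomp Require Import all_boot all_order all_algebra.
From mathcomp Require Import reals.
Set Implicit Arguments. Unset Strict Implicit. Unset Printing Implicit Defensive.

(* The critical points are the eigenvalues of the compression [A] of [diag(lam)] to
   the hyperplane of zero-sum vectors: for each [mu_i] there is a nonzero zero-sum
   [y_i] with [(lam_k - mu_i) y_ik] independent of [k], namely [y_ik = q_k(mu_i)] with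
   [q_k = q / (X - lam_k)] when [q(mu_i) != 0], and a Helmert vector supported on
   [{k | lam_k = mu_i}] otherwise; these [y_i] are pairwise orthogonal.
   Expanding in this eigenbasis, [mu_1 + ... + mu_r = sum_k c_k lam_k] with weights
   [0 <= c_k <= 1 - 1/n] summing to [r], which gives the upper bound.  For the lower
   bound, the trace of [A] on the [r]-dimensional space of zero-sum vectors supported
   on the first [r + 1] coordinates, [r/(r+1) (lam_1 + ... + lam_(r+1))], is a
   combination [sum_i a_i mu_i] with [0 <= a_i <= 1] and [sum_i a_i = r], hence is at
   most [mu_1 + ... + mu_r]; and [lam_1] dominates the mean of [lam_2, ..., lam_(r+1)]. *)

From mathcomp Require Import all_boot all_order all_algebra.
From mathcomp Require Import reals.
From mathcomp Require Import ring.
Import Order.TTheory GRing.Theory Num.Theory.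
Local Open Scope ring_scope.
Set Implicit Arguments. Unset Strict Implicit. Unset Printing Implicit Defensive.

Lemma sum_eq_natr (R : nzSemiRingType) (N : nat) (k : 'I_N) :
  \sum_(l < N) (k == l :> nat)%:R = 1 :> R.
Proof.
rewrite (bigD1 k) //= eqxx big1 ?addr0 // => l lk.
by rewrite (inj_eq val_inj) eq_sym (negbTE lk).
Qed.

Lemma deriv_prod (R : comNzRingType) (n : nat) (F : nat -> {poly R}) :
  (\prod_(k < n) F k)^`() = \sum_(k < n) (F k)^`() * \prod_(j < n | (j : nat) != k) F j.
Proof.
elim: n => [|n IH]; first by rewrite !big_ord0 derivC.
rewrite big_ord_recr /= derivM IH big_distrl /= big_ord_recr /=; congr (_ + _).
  apply: eq_bigr => k _; rewrite -mulrA; congr (_ * _).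
  rewrite [RHS]big_mkcond big_ord_recr /= ifT; last by rewrite eq_sym ltn_eqF.
  by rewrite -big_mkcond.
rewrite mulrC; congr (_ * _).
rewrite [RHS]big_mkcond big_ord_recr /= eqxx mulr1.
by apply: eq_bigr => k _; rewrite ltn_eqF.
Qed.

Lemma deriv_prod_XsubC (R : comNzRingType) (n : nat) (L : nat -> R) :
  (\prod_(k < n) ('X - (L k)%:P))^`()
    = \sum_(k < n) \prod_(j < n | (j : nat) != k) ('X - (L j)%:P).
Proof.
rewrite (@deriv_prod _ n (fun k => 'X - (L k)%:P)).
by apply: eq_bigr => k _; rewrite derivXsubC mul1r.
Qed.

Lemma prod_XsubC_split (R : idomainType) (n : nat) (L : nat -> R) (a : R) :
  \prod_(k < n) ('X - (L k)%:P) =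
  ('X - a%:P) ^+ #|[set k : 'I_n | L k == a]| * \prod_(k < n | L k != a) ('X - (L k)%:P).
Proof.
rewrite (bigID (fun k : 'I_n => L k == a)) /=; congr (_ * _).
rewrite (eq_bigr (fun _ => 'X - a%:P)); last by move=> k /eqP ->.
by rewrite -prodr_const; apply: eq_bigl => k; rewrite inE.
Qed.

(* Writing [q = (X - a)^c h] with [h.[a] != 0], [q' = (X - a)^(c-1) (c h + (X - a) h')]
   and [c h.[a] != 0]: the root [a] of [q] has multiplicity exactly [c - 1] in [q']. *)
Lemma deriv_root_mult_lt (R : numFieldType) (n m : nat) (L M : nat -> R) (a : R) :
  (\prod_(k < n) ('X - (L k)%:P))^`() = n%:R *: \prod_(i < m) ('X - (M i)%:P) ->
  (\prod_(k < n) ('X - (L k)%:P)).[a] = 0 ->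
  (#|[set i : 'I_m | M i == a]| < #|[set k : 'I_n | L k == a]|)%N.
Proof.
rewrite (@prod_XsubC_split _ n L a) (@prod_XsubC_split _ m M a).
set cM := #|[set i : 'I_m | M i == a]|; set cL := #|[set k : 'I_n | L k == a]|.
set h := \prod_(k < n | L k != a) ('X - (L k)%:P).
set w := \prod_(i < m | M i != a) ('X - (M i)%:P).
have ha : h.[a] != 0.
  by rewrite horner_prod; apply/prodf_neq0 => k Lk; rewrite hornerXsubC subr_eq0 eq_sym.
case: cL => [|c] q_deriv q_root.
  by move/eqP: q_root; rewrite expr0 mul1r (negbTE ha).
rewrite ltnNge; apply/negP => c_le.
have lhs : (('X - a%:P) ^+ c.+1 * h)^`() =
    ('X - a%:P) ^+ c * (c.+1%:R%:P * h + ('X - a%:P) * h^`()).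
  by rewrite derivM deriv_exp derivXsubC mul1r exprS /= -mulr_natl -polyC_natr; ring.
have rhs : n%:R *: (('X - a%:P) ^+ cM * w) =
    ('X - a%:P) ^+ c * (n%:R%:P * (('X - a%:P) ^+ (cM - c) * w)).
  by rewrite -mul_polyC -{1}(subnKC (ltnW c_le)) exprD; ring.
move: q_deriv; rewrite lhs rhs => /mulfI-/(_ (expf_neq0 _ (negbT (polyXsubC_eq0 a)))).
move=> /(congr1 (horner^~ a)); rewrite !hornerE subrr expr0n /=.
rewrite (_ : (cM - c == 0)%N = false); last by rewrite subn_eq0 leqNgt c_le.
by rewrite !mul0r !mulr0 addr0 mul0r => /eqP; rewrite mulf_eq0 (negbTE ha) orbF pnatr_eq0.
Qed.

Lemma sum_sqr_gt0 (R : realDomainType) (n : nat) (f : nat -> R) :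
  (0 < n)%N -> f 0%N != 0 -> 0 < \sum_(k < n) f k ^+ 2.
Proof.
move=> n_gt0 f0; rewrite (bigD1 (Ordinal n_gt0)) //=.
apply: lt_le_trans (_ : f 0%N ^+ 2 <= _); first by rewrite lt_def sqr_ge0 andbT sqrf_eq0.
by rewrite lerDl; apply: sumr_ge0 => k _; exact: sqr_ge0.
Qed.

Lemma horner_deriv_prod_XsubC_identity (R : comNzRingType) (n : nat) (L : nat -> R) (a : R) :
  let q := \prod_(k < n) ('X - (L k)%:P) in
  let qk k := \prod_(j < n | (j : nat) != k) ('X - (L j)%:P) in
  q.[a] *: q^`() - q^`().[a] *: q = (a%:P - 'X) * \sum_(k < n) (qk k).[a] *: qk k.
Proof.
move=> q qk; rewrite deriv_prod_XsubC horner_sum scaler_suml scaler_sumr -sumrB mulr_sumr.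
apply: eq_bigr => k _.
have q_split : q = ('X - (L k)%:P) * qk k by rewrite /q (bigD1 k) //=.
have qa : q.[a] = (a - L k) * (qk k).[a] by rewrite {1}q_split hornerM hornerXsubC.
by rewrite qa [in X in _ - X]q_split -!mul_polyC polyCM polyCB /qk; ring.
Qed.

(* Dividing the identity above by [X - a] and evaluating at [a] gives
   [q.[a] * (q'/(X - a)).[a] = - sum_k qk.[a]^2 < 0], so [a] is at most a simple
   root of [q']. *)
Lemma deriv_nonroot_simple (R : realFieldType) (n m : nat) (L M : nat -> R) (a : R) :
  (0 < n)%N ->
  (\prod_(k < n) ('X - (L k)%:P))^`() = n%:R *: \prod_(i < m) ('X - (M i)%:P) ->
  (\prod_(k < n) ('X - (L k)%:P)).[a] != 0 ->
  (#|[set i : 'I_m | M i == a]| <= 1)%N.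
Proof.
move=> n_gt0 q_deriv q_a; rewrite leqNgt; apply/negP => c_gt1.
have := @horner_deriv_prod_XsubC_identity _ n L a => /=.
set q := \prod_(k < n) _ in q_deriv q_a *; set T := \sum_(k < n) _.
set c := #|[set i : 'I_m | M i == a]| in c_gt1.
set w := \prod_(i < m | M i != a) ('X - (M i)%:P).
have q'_eq : q^`() = ('X - a%:P) * (('X - a%:P) * (n%:R%:P * (('X - a%:P) ^+ (c - 2) * w))).
  rewrite q_deriv (@prod_XsubC_split _ m M a) -/c -/w -mul_polyC.
  by rewrite -{1}(subnKC c_gt1) exprD; ring.
have q'_a : q^`().[a] = 0 by rewrite q'_eq hornerM hornerXsubC subrr mul0r.
rewrite q'_a scale0r subr0 q'_eq -mul_polyC => identity.
have : ('X - a%:P) * (q.[a]%:P * (('X - a%:P) * (n%:R%:P * (('X - a%:P) ^+ (c - 2) * w))))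
    = ('X - a%:P) * (- T).
  by apply: (@etrans _ _ ((a%:P - 'X) * T)); [rewrite -identity | ]; ring.
move=> /(mulfI (negbT (polyXsubC_eq0 a))) /(congr1 (horner^~ a)).
rewrite hornerN !hornerM hornerXsubC subrr mul0r mulr0 /T horner_sum.
move=> /esym /eqP; rewrite oppr_eq0; apply/negP; rewrite gt_eqF //.
under eq_bigr do rewrite hornerZ -expr2.
apply: (@sum_sqr_gt0 _ n (fun k => (\prod_(j < n | j != k :> nat) ('X - (L j)%:P)).[a])) => //.
apply: contra q_a => /eqP qk0_a.
by rewrite /q (bigD1 (Ordinal n_gt0)) //= hornerM qk0_a mulr0.
Qed.

Lemma sum_if_lt_eq (R : nzSemiRingType) (c j : nat) (A B : R) : (j < c)%N ->
  \sum_(t < c) (if (t < j)%N then A else if (t : nat) == j then B else 0) = j%:R * A + B.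
Proof.
move=> jc; rewrite (bigID (fun t : 'I_c => (t < j.+1)%N)) /= [X in _ + X]big1 ?addr0; last first.
  by move=> t; rewrite ltnS -ltnNge => jt; rewrite ltnNge (ltnW jt) /= gtn_eqF.
rewrite -(big_ord_widen c (fun t => if (t < j)%N then A else if t == j then B else 0) jc).
rewrite big_ord_recr /= ltnn eqxx (eq_bigr (fun _ => A)) => [|t _]; last by rewrite ltn_ord.
by rewrite sumr_const card_ord mulr_natl.
Qed.

Definition helmert (R : nzRingType) (j t : nat) : R :=
  if (t < j)%N then 1 else if t == j then - j%:R else 0.

Definition helmert_on (R : nzRingType) (n : nat) (C : {set 'I_n}) (j k : nat) : R :=
  \sum_(t < #|C|) helmert R j t * (enum_val t == k :> nat)%:R.

Lemma helmert_norm (R : nzRingType) (c j : nat) : (j < c)%N ->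
  \sum_(t < c) helmert R j t * helmert R j t = j%:R + j%:R ^+ 2.
Proof.
move=> jc; rewrite -[X in X + _]mulr1 -(sum_if_lt_eq 1 (j%:R ^+ 2) jc).
apply: eq_bigr => t _; rewrite /helmert; case: ifP => _; first by rewrite mulr1.
by case: ifP => _; rewrite ?mulr0 // mulrNN expr2.
Qed.

Lemma helmert_orth (R : nzRingType) (c j j' : nat) : (j < j')%N -> (j' < c)%N ->
  \sum_(t < c) helmert R j t * helmert R j' t = 0.
Proof.
move=> jj' j'c; have jc := ltn_trans jj' j'c.
transitivity (j%:R * 1 - j%:R : R); last by rewrite mulr1 subrr.
rewrite -(sum_if_lt_eq 1 (- j%:R) jc).
apply: eq_bigr => t _; rewrite /helmert; case: (ltnP t j) => tj.
  by rewrite (ltn_trans tj jj') mulr1.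
by case: eqP => [->|_]; rewrite ?mul0r // jj' mulr1.
Qed.

Lemma helmert_on_sum (R : nzRingType) (n : nat) (C : {set 'I_n}) (j : nat) :
  (j < #|C|)%N -> \sum_(k < n) helmert_on R C j k = 0.
Proof.
move=> jC; rewrite /helmert_on exchange_big /=.
under eq_bigr do rewrite -mulr_sumr sum_eq_natr mulr1.
by rewrite sum_if_lt_eq // mulr1 subrr.
Qed.

Lemma helmert_on_out (R : nzRingType) (n : nat) (C : {set 'I_n}) (j : nat) (k : 'I_n) :
  k \notin C -> helmert_on R C j k = 0.
Proof.
move=> kC; apply: big1 => t _; case: eqP => [/val_inj tk | _]; last by rewrite mulr0.
by move: kC; rewrite -tk enum_valP.
Qed.

Lemma helmert_on_dot (R : comNzRingType) (n : nat) (C : {set 'I_n}) (j j' : nat) :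
  \sum_(k < n) helmert_on R C j k * helmert_on R C j' k
    = \sum_(t < #|C|) helmert R j t * helmert R j' t.
Proof.
rewrite (eq_bigr (fun k : 'I_n => \sum_(t < #|C|) \sum_(s < #|C|)
    (helmert R j t * helmert R j' s) *
    ((enum_val t == k :> nat)%:R * (enum_val s == k :> nat)%:R))); last first.
  move=> k _; rewrite /helmert_on mulr_suml; apply: eq_bigr => t _.
  by rewrite mulr_sumr; apply: eq_bigr => s _; ring.
rewrite exchange_big /=; apply: eq_bigr => t _; rewrite exchange_big /=.
rewrite (bigD1 t) //= [X in _ + X]big1 ?addr0 => [|s st]; last first.
  rewrite -mulr_sumr big1 ?mulr0 // => k _.
  case: (eqVneq (enum_val t : nat) k) => [tk|]; last by rewrite mul0r.
  case: (eqVneq (enum_val s : nat) k) => [sk|]; last by rewrite mulr0.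
  by move: st; rewrite (enum_val_inj (val_inj (etrans tk (esym sk)))) eqxx.
rewrite -mulr_sumr (eq_bigr (fun k : 'I_n => (enum_val t == k :> nat)%:R)).
  by rewrite sum_eq_natr mulr1.
by move=> k _; case: eqP; rewrite ?mulr1 ?mulr0.
Qed.

Section CriticalPointEigenvectors.

Variables (R : realFieldType) (m : nat) (L M : nat -> R).
Local Notation n := m.+1.
Local Notation q := (\prod_(k < n) ('X - (L k)%:P)).
Local Notation qk k := (\prod_(j < n | (j : nat) != k) ('X - (L j)%:P)).

Hypothesis q_deriv : q^`() = n%:R *: \prod_(i < m) ('X - (M i)%:P).

Local Notation C i := [set k : 'I_n | L k == M i].
Local Notation J i := #|[set i' : 'I_m | (M i' == M i) && (i' <= i)%N]|.

(* When [q.[M i] = 0], the roots of [q] equal to [M i] outnumber the critical points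
   equal to [M i] (by [deriv_root_mult_lt]), so each of the latter gets its own
   Helmert vector on the former, selected by its rank [J i] among them. *)
Definition crit_eigvec i : nat -> R :=
  if q.[M i] != 0 then fun k => (qk k).[M i] else helmert_on R (C i) (J i).

Definition crit_eigshift i : R := if q.[M i] != 0 then - q.[M i] else 0.

Let horner_q_split x k : (k < n)%N -> q.[x] = (x - L k) * (qk k).[x].
Proof. by move=> kn; rewrite (bigD1 (Ordinal kn)) //= hornerM hornerXsubC. Qed.

Let horner_q_deriv x : q^`().[x] = \sum_(k < n) (qk k).[x].
Proof. by rewrite deriv_prod_XsubC horner_sum. Qed.

Let q_deriv_M i : (i < m)%N -> q^`().[M i] = 0.
Proof.
move=> im; rewrite q_deriv hornerZ horner_prod (bigD1 (Ordinal im)) //=.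
by rewrite hornerXsubC subrr mul0r mulr0.
Qed.

Let rank_bounds i : (i < m)%N -> q.[M i] = 0 -> (0 < J i < #|C i|)%N.
Proof.
move=> im q_Mi; apply/andP; split.
  by apply/card_gt0P; exists (Ordinal im); rewrite inE eqxx leqnn.
apply: leq_ltn_trans (deriv_root_mult_lt q_deriv q_Mi).
by apply: subset_leq_card; apply/subsetP => i'; rewrite !inE => /andP[].
Qed.

Let rank_lt i i' : (i' < m)%N -> M i = M i' -> (i < i')%N -> (J i < J i')%N.
Proof.
move=> i'm Mii' ii'; apply: proper_card; apply/properP; split.
  apply/subsetP => x; rewrite !inE Mii' => /andP[-> xi] /=.
  exact: leq_trans xi (ltnW ii').
by exists (Ordinal i'm); rewrite !inE ?eqxx ?leqnn //= -Mii' eqxx /= -ltnNge.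
Qed.

Let crit_nonroot_inj i i' : (i < m)%N -> (i' < m)%N ->
  q.[M i] != 0 -> M i = M i' -> i = i'.
Proof.
move=> im i'm q_Mi Mii'.
have := deriv_nonroot_simple (ltn0Sn m) q_deriv q_Mi.
move=> /card_le1_eqP/(_ (Ordinal im) (Ordinal i'm)).
by rewrite !inE eqxx -Mii' eqxx => /(_ isT isT) [].
Qed.

Lemma crit_eigvec_sum0 i : (i < m)%N -> \sum_(k < n) crit_eigvec i k = 0.
Proof.
move=> im; rewrite /crit_eigvec; case: ifPn => [_ | /negPn/eqP q_Mi].
  by rewrite -horner_q_deriv q_deriv_M.
by apply: helmert_on_sum; have /andP[] := rank_bounds im q_Mi.
Qed.

Lemma crit_eigvec_eigen i k : (k < n)%N ->
  L k * crit_eigvec i k = M i * crit_eigvec i k + crit_eigshift i.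
Proof.
move=> kn; rewrite /crit_eigvec /crit_eigshift; case: ifPn => _.
  by rewrite (horner_q_split _ kn); ring.
rewrite addr0; case: (boolP (Ordinal kn \in C i)) => [|kC].
  by rewrite inE => /eqP /= ->.
by rewrite (helmert_on_out _ _ kC) !mulr0.
Qed.

Lemma crit_eigvec_norm_gt0 i : (i < m)%N -> 0 < \sum_(k < n) crit_eigvec i k ^+ 2.
Proof.
move=> im; rewrite /crit_eigvec; case: ifPn => [q_Mi | /negPn/eqP q_Mi].
  apply: (@sum_sqr_gt0 _ n (fun k => (qk k).[M i])) => //.
  by apply: contra q_Mi => /eqP qk0; rewrite (horner_q_split _ (ltn0Sn m)) qk0 mulr0.
have /andP[J_gt0 J_lt] := rank_bounds im q_Mi.
under eq_bigr do rewrite expr2.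
rewrite helmert_on_dot helmert_norm //.
by rewrite ltr_pwDl ?sqr_ge0 // ltr0n.
Qed.

(* [(x - y) * sum_k qk.[x] qk.[y] = q.[x] q'.[y] - q.[y] q'.[x]]. *)
Let orth_nonroot i i' : (i < m)%N -> (i' < m)%N -> M i != M i' ->
  \sum_(k < n) (qk k).[M i] * (qk k).[M i'] = 0.
Proof.
move=> im i'm Mii'.
have : (M i - M i') * \sum_(k < n) (qk k).[M i] * (qk k).[M i'] = 0.
  rewrite mulr_sumr; transitivity
    (\sum_(k < n) ((qk k).[M i'] * q.[M i] - (qk k).[M i] * q.[M i'])).
    apply: eq_bigr => k _.
    by rewrite (horner_q_split (M i) (ltn_ord k)) (horner_q_split (M i') (ltn_ord k)); ring.
  by rewrite sumrB -!mulr_suml -!horner_q_deriv !q_deriv_M // !mul0r subrr.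
by move/eqP; rewrite mulf_eq0 subr_eq0 (negbTE Mii') => /eqP.
Qed.

Let orth_mixed i i' : (i' < m)%N -> q.[M i] != 0 -> q.[M i'] = 0 ->
  \sum_(k < n) (qk k).[M i] * helmert_on R (C i') (J i') k = 0.
Proof.
move=> i'm q_Mi q_Mi'.
have Mii' : M i - M i' != 0.
  by rewrite subr_eq0; apply: contra q_Mi => /eqP ->; rewrite q_Mi'.
transitivity (\sum_(k < n) q.[M i] / (M i - M i') * helmert_on R (C i') (J i') k).
  apply: eq_bigr => k _; case: (boolP (k \in C i')) => [|kC]; last first.
    by rewrite helmert_on_out ?mulr0.
  by rewrite inE => /eqP Lk; rewrite (horner_q_split _ (ltn_ord k)) Lk; field.
by rewrite -mulr_sumr helmert_on_sum ?mulr0 //; have /andP[] := rank_bounds i'm q_Mi'.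
Qed.

Let orth_root i i' : (i < m)%N -> (i' < m)%N -> i != i' -> q.[M i] = 0 -> q.[M i'] = 0 ->
  \sum_(k < n) helmert_on R (C i) (J i) k * helmert_on R (C i') (J i') k = 0.
Proof.
move=> im i'm ii' q_Mi q_Mi'; case: (eqVneq (M i) (M i')) => [Mii' | Mii']; last first.
  apply: big1 => k _; case: (boolP (k \in C i)) => [|kC]; last by rewrite helmert_on_out ?mul0r.
  by rewrite inE => /eqP Lk; rewrite (@helmert_on_out _ _ (C i') _ k) ?mulr0 // inE Lk.
have CE : C i = C i' by apply/setP => k; rewrite !inE Mii'.
have /andP[_ Ji_lt] := rank_bounds im q_Mi; have /andP[_ Ji'_lt] := rank_bounds i'm q_Mi'.
rewrite CE helmert_on_dot; case: (ltngtP i i') => [ii'_lt | i'i_lt | ii'_eq].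
- exact: helmert_orth (rank_lt i'm Mii' ii'_lt) Ji'_lt.
- under eq_bigr do rewrite mulrC.
  by apply: helmert_orth (rank_lt im (esym Mii') i'i_lt) _; rewrite -CE.
- by move: ii'; rewrite ii'_eq eqxx.
Qed.

Lemma crit_eigvec_orth i i' : (i < m)%N -> (i' < m)%N -> i != i' ->
  \sum_(k < n) crit_eigvec i k * crit_eigvec i' k = 0.
Proof.
move=> im i'm ii'; rewrite /crit_eigvec.
case: ifPn => [q_Mi | /negPn/eqP q_Mi]; case: ifPn => [q_Mi' | /negPn/eqP q_Mi'].
- apply: orth_nonroot => //; apply: contra ii' => /eqP Mii'.
  by apply/eqP; exact: crit_nonroot_inj.
- exact: orth_mixed.
- by under eq_bigr do rewrite mulrC; exact: orth_mixed.
- exact: orth_root.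
Qed.

End CriticalPointEigenvectors.

Lemma nonincreasing_le (R : numDomainType) (N : nat) (x : nat -> R) (a b : nat) :
  (forall k, (k.+1 < N)%N -> x k.+1 <= x k) -> (a <= b)%N -> (b < N)%N -> x b <= x a.
Proof.
move=> x_noninc; elim: b => [|b IH]; first by rewrite leqn0 => /eqP ->.
rewrite leq_eqVlt => /orP[/eqP -> // | ab] bN.
by apply: le_trans (x_noninc _ bN) (IH ab (ltnW bN)).
Qed.

(* The difference of the two sides is a sum of products of nonnegative factors
   [(th - c k) (x k - x p)] for [k < p] and [c k (x p - x k)] for [k >= p]. *)
Lemma sum_bounded_weights_le (R : realDomainType) (N p : nat) (x c : nat -> R) (th : R) :
  (p < N)%N -> (forall k, (k.+1 < N)%N -> x k.+1 <= x k) ->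
  (forall k, (k < N)%N -> 0 <= c k <= th) ->
  \sum_(k < N) c k * x k
    <= th * \sum_(k < p) x k + (\sum_(k < N) c k - p%:R * th) * x p.
Proof.
move=> pN x_noninc c_bounds.
have head_sum : th * \sum_(k < p) x k = \sum_(k < N) (if (k < p)%N then th * x k else 0).
  rewrite (big_ord_widen _ _ (ltnW pN)) mulr_sumr big_mkcond /=.
  by apply: eq_bigr => k _; case: ifP.
have head_card : p%:R * th * x p = \sum_(k < N) (if (k < p)%N then th * x p else 0).
  rewrite -big_mkcond /= -(big_ord_widen _ (fun _ => th * x p) (ltnW pN)) /=.
  by rewrite sumr_const card_ord mulr_natl mulrnAl.
rewrite -subr_ge0 mulrBl head_sum mulr_suml head_card.
have -> : \sum_(k < N) (if (k < p)%N then th * x k else 0) +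
    (\sum_(k < N) c k * x p - \sum_(k < N) (if (k < p)%N then th * x p else 0)) -
    \sum_(k < N) c k * x k =
  \sum_(k < N) (if (k < p)%N then (th - c k) * (x k - x p) else c k * (x p - x k)).
  by rewrite -sumrB -big_split -sumrB /=; apply: eq_bigr => k _; case: ifP => _; ring.
apply: sumr_ge0 => k _; have /andP[c_ge0 c_le] := c_bounds k (ltn_ord k).
case: ifP => kp; apply: mulr_ge0; rewrite ?subr_ge0 //.
- by apply: (nonincreasing_le x_noninc) => //; exact: ltnW.
- by apply: (nonincreasing_le x_noninc) => //; rewrite leqNgt kp.
Qed.

Lemma sqr_sum_le (R : realDomainType) (N : nat) (f : nat -> R) :
  (\sum_(k < N) f k) ^+ 2 <= N%:R * \sum_(k < N) f k ^+ 2.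
Proof.
case: N => [|N]; first by rewrite !big_ord0 expr0n mul0r.
set S := \sum_(k < N.+1) f k; set Q := \sum_(k < N.+1) f k ^+ 2.
have : 0 <= \sum_(k < N.+1) (N.+1%:R * f k - S) ^+ 2.
  by apply: sumr_ge0 => k _; exact: sqr_ge0.
have -> : \sum_(k < N.+1) (N.+1%:R * f k - S) ^+ 2 = N.+1%:R * (N.+1%:R * Q - S ^+ 2).
  rewrite (eq_bigr (fun k : 'I_N.+1 =>
    N.+1%:R ^+ 2 * f k ^+ 2 - (2%:R * N.+1%:R * S) * f k + S ^+ 2)); last by move=> k _; ring.
  by rewrite big_split sumrB /= -!mulr_sumr sumr_const card_ord -/S -/Q mulr_natl; ring.
by rewrite pmulr_rge0 ?ltr0n // subr_ge0.
Qed.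

(* The matrix [V := (v i k)] satisfies [V V^T = diag d], so [V^T diag(d)^-1 V = 1]. *)
Lemma orthogonal_basis_completeness (R : fieldType) (n : nat) (v : nat -> nat -> R) :
  (forall i, (i < n)%N -> \sum_(k < n) v i k ^+ 2 != 0) ->
  (forall i i', (i < n)%N -> (i' < n)%N -> i != i' -> \sum_(k < n) v i k * v i' k = 0) ->
  forall k l, (k < n)%N -> (l < n)%N ->
    \sum_(i < n) v i k * v i l / \sum_(j < n) v i j ^+ 2 = (k == l)%:R.
Proof.
move=> v_norm_neq0 v_orth k l kn ln.
pose V := \matrix_(i < n, k < n) v i k.
pose W := \matrix_(k < n, i < n) (v i k / \sum_(j < n) v i j ^+ 2).
have VW : V *m W = 1%:M.
  apply/matrixP => i i'; rewrite !mxE; under eq_bigr do rewrite !mxE.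
  have [<-|ii'] := eqVneq i i'.
    under eq_bigr do rewrite mulrA -expr2.
    by rewrite -mulr_suml mulfV // v_norm_neq0.
  under eq_bigr do rewrite mulrA.
  by rewrite -mulr_suml v_orth ?mul0r.
have := mulmx1C VW => /matrixP /(_ (Ordinal kn) (Ordinal ln)).
rewrite !mxE /=; under eq_bigr do rewrite !mxE /=.
by move=> <-; apply: eq_bigr => i _; rewrite mulrAC.
Qed.

Section PartialSumsOfEigenvalues.

Variables (R : realFieldType) (m : nat) (L M be : nat -> R) (y : nat -> nat -> R).
Local Notation n := m.+1.
Local Notation d i := (\sum_(k < n) y i k ^+ 2).

Hypotheses
  (L_noninc : forall k, (k.+1 < n)%N -> L k.+1 <= L k)
  (M_noninc : forall i, (i.+1 < m)%N -> M i.+1 <= M i)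
  (y_sum0 : forall i, (i < m)%N -> \sum_(k < n) y i k = 0)
  (y_eigen : forall i k, (i < m)%N -> (k < n)%N -> L k * y i k = M i * y i k + be i)
  (y_norm_gt0 : forall i, (i < m)%N -> 0 < d i)
  (y_orth : forall i i', (i < m)%N -> (i' < m)%N -> i != i' ->
     \sum_(k < n) y i k * y i' k = 0).

Let d_neq0 i : (i < m)%N -> d i != 0.
Proof. by move=> im; rewrite gt_eqF ?y_norm_gt0. Qed.

Let n_neq0 : n%:R != 0 :> R.
Proof. by rewrite pnatr_eq0. Qed.

(* Adjoining the all-ones vector, orthogonal to every [y i], completes the [y i]
   to an orthogonal basis of [R^n]. *)
Lemma eigenbasis_completeness k l : (k < n)%N -> (l < n)%N ->
  \sum_(i < m) y i k * y i l / d i = (k == l)%:R - n%:R^-1.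
Proof.
move=> kn ln; pose v i k := if (i < m)%N then y i k else 1.
have v_last_norm : \sum_(k < n) v m k ^+ 2 = n%:R.
  under eq_bigr do rewrite /v ltnn expr1n.
  by rewrite sumr_const card_ord.
have v_norm i : (i < m)%N -> \sum_(k < n) v i k ^+ 2 = d i.
  by move=> im; apply: eq_bigr => j _; rewrite /v im.
have := @orthogonal_basis_completeness R n v _ _ k l kn ln.
rewrite big_ord_recr /= v_last_norm /v ltnn !mul1r => <-.
- by rewrite addrK; apply: eq_bigr => i _; rewrite (ltn_ord i) -v_norm.
- move=> i; rewrite ltnS leq_eqVlt => /orP[/eqP -> | im]; first by rewrite v_last_norm.
  by rewrite v_norm ?d_neq0.
- have v_last j : (j < n)%N -> ~~ (j < m)%N -> j = m.
    by move=> jn jm; apply/eqP; rewrite eqn_leq -ltnS jn leqNgt jm.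
  move=> i i' i_n i'_n ii'; rewrite /v.
  case: (boolP (i < m)%N) => im; case: (boolP (i' < m)%N) => i'm.
  + exact: y_orth.
  + by under eq_bigr do rewrite mulr1; exact: y_sum0.
  + by under eq_bigr do rewrite mul1r; exact: y_sum0.
  + by move: ii'; rewrite (v_last i) // (v_last i') // eqxx.
Qed.

Lemma eigenvalue_rayleigh i : (i < m)%N -> M i * d i = \sum_(k < n) L k * y i k ^+ 2.
Proof.
move=> im; transitivity (\sum_(k < n) (M i * y i k ^+ 2 + be i * y i k)).
  by rewrite big_split /= -!mulr_sumr y_sum0 // mulr0 addr0.
by apply: eq_bigr => k _; rewrite expr2 [in RHS]mulrA (y_eigen im (ltn_ord k)); ring.
Qed.

Variable r : nat.
Hypotheses (r_gt0 : (0 < r)%N) (r_le_m : (r <= m)%N).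

Let r_lt_n : (r < n)%N. Proof. by []. Qed.

Let i_lt_m (i : 'I_r) : (i < m)%N. Proof. exact: leq_trans (ltn_ord i) r_le_m. Qed.

Lemma partial_sum_eigen_upper :
  n%:R * \sum_(i < r) M i <= m%:R * \sum_(i < r) L i + r%:R * L r.
Proof.
pose c k := \sum_(i < r) y i k ^+ 2 / d i.
have sum_M : \sum_(i < r) M i = \sum_(k < n) c k * L k.
  under [RHS]eq_bigr do rewrite /c mulr_suml.
  rewrite exchange_big /=; apply: eq_bigr => i _.
  rewrite -[M i](mulfK (d_neq0 (i_lt_m i))) eigenvalue_rayleigh ?i_lt_m // mulr_suml.
  by apply: eq_bigr => k _; ring.
have c_bounds k : (k < n)%N -> 0 <= c k <= 1 - n%:R^-1.
  have y2_ge0 i : (i < m)%N -> 0 <= y i k ^+ 2 / d i.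
    by move=> im; apply: divr_ge0; [exact: sqr_ge0 | exact/ltW/y_norm_gt0].
  move=> kn; rewrite sumr_ge0 => [|i _]; last exact/y2_ge0/i_lt_m.
  have := eigenbasis_completeness kn kn; rewrite eqxx => <-.
  rewrite /c (big_ord_widen m (fun i => y i k ^+ 2 / d i) r_le_m).
  rewrite [leRHS]big_mkcond [leLHS]big_mkcond /=; apply: ler_sum => i _.
  by rewrite -expr2; case: ifP => // _; exact: y2_ge0.
have sum_c : \sum_(k < n) c k = r%:R.
  rewrite /c exchange_big /= (eq_bigr (fun _ => 1)) ?sumr_const ?card_ord // => i _.
  by rewrite -mulr_suml mulfV ?d_neq0 ?i_lt_m.
have := sum_bounded_weights_le r_lt_n L_noninc c_bounds.
rewrite sum_c -sum_M => /(ler_wpM2l (ler0n _ n)) /le_trans; apply.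
rewrite le_eqVlt; apply/orP; left; apply/eqP.
by move: n_neq0; rewrite -natr1 => ?; field.
Qed.

Local Notation G w k l := (\sum_(i < m) w i * (y i k * y i l / d i)).
Local Notation Y i := (\sum_(k < r.+1) y i k).
Local Notation Q i := (\sum_(k < r.+1) y i k ^+ 2).

(* [a i] is the squared length of the projection of [y i / |y i|] on the
   [r]-dimensional space of zero-sum vectors supported on [{0, ..., r}]. *)
Local Notation a i := (Q i / d i - r.+1%:R^-1 * (Y i ^+ 2 / d i)).

Lemma sum_weighted_proj_weights (w : nat -> R) :
  \sum_(i < m) w i * a i
    = \sum_(k < r.+1) G w k k - r.+1%:R^-1 * \sum_(k < r.+1) \sum_(l < r.+1) G w k l.
Proof.
have -> : \sum_(k < r.+1) G w k k = \sum_(i < m) w i * (Q i / d i).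
  rewrite exchange_big /=; apply: eq_bigr => i _.
  by rewrite mulr_suml mulr_sumr; apply: eq_bigr => k _; rewrite expr2.
have -> : \sum_(k < r.+1) \sum_(l < r.+1) G w k l = \sum_(i < m) w i * (Y i ^+ 2 / d i).
  under eq_bigr do rewrite exchange_big /=.
  rewrite exchange_big /=; apply: eq_bigr => i _; symmetry.
  rewrite expr2 mulr_suml mulr_suml mulr_sumr; apply: eq_bigr => k _.
  by rewrite mulr_sumr mulr_suml mulr_sumr; apply: eq_bigr => l _; ring.
by rewrite mulr_sumr -sumrB; apply: eq_bigr => i _; ring.
Qed.

Let r1_neq0 : r.+1%:R != 0 :> R.
Proof. by rewrite pnatr_eq0. Qed.

Let G1 (k l : 'I_r.+1) : G (fun=> 1) k l = (k == l :> nat)%:R - n%:R^-1.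
Proof.
under eq_bigr do rewrite mul1r.
by apply: eigenbasis_completeness; apply: leq_trans (ltn_ord _) r_lt_n.
Qed.

Let sum_row_G1 (k : 'I_r.+1) : \sum_(l < r.+1) G (fun=> 1) k l = 1 - r.+1%:R / n%:R.
Proof.
under eq_bigr do rewrite G1.
by rewrite sumrB sum_eq_natr sumr_const card_ord mulr_natl.
Qed.

Lemma sum_proj_weights : \sum_(i < m) a i = r%:R.
Proof.
transitivity (\sum_(i < m) 1 * a i); first by under [RHS]eq_bigr do rewrite mul1r.
rewrite (sum_weighted_proj_weights (fun=> 1)).
rewrite [X in X - _](eq_bigr (fun=> 1 - n%:R^-1)) => [|k _]; last by rewrite G1 eqxx.
rewrite [X in _ * X](eq_bigr (fun=> 1 - r.+1%:R / n%:R)) => [|k _]; last exact: sum_row_G1.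
rewrite !sumr_const !card_ord.
by move: n_neq0 r1_neq0; rewrite -!natr1 => n0 r0; field; rewrite n0 r0.
Qed.

Local Notation g l := (\sum_(i < m) be i * (y i l / d i)).

Let GM (k l : 'I_r.+1) : G M k l = L k * ((k == l :> nat)%:R - n%:R^-1) - g l.
Proof.
have kn : (k < n)%N := leq_trans (ltn_ord k) r_lt_n.
rewrite -(eigenbasis_completeness kn (leq_trans (ltn_ord l) r_lt_n)) mulr_sumr -sumrB.
apply: eq_bigr => i _; rewrite !mulrA -[M i * y i k](addrK (be i)) -(y_eigen (ltn_ord i) kn).
by ring.
Qed.

Lemma trace_proj_weights : \sum_(i < m) a i * M i = r%:R / r.+1%:R * \sum_(k < r.+1) L k.
Proof.
transitivity (\sum_(i < m) M i * a i); first by apply: eq_bigr => i _; rewrite mulrC.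
rewrite sum_weighted_proj_weights.
rewrite [X in X - _](eq_bigr (fun k : 'I_r.+1 => L k * (1 - n%:R^-1) - g k)) => [|k _];
  last by rewrite GM eqxx.
rewrite [X in _ * X](eq_bigr (fun k : 'I_r.+1 =>
    L k * (1 - r.+1%:R / n%:R) - \sum_(l < r.+1) g l)) => [|k _]; last first.
  under eq_bigr do rewrite GM.
  by rewrite sumrB -mulr_sumr sumrB sum_eq_natr sumr_const card_ord mulr_natl.
rewrite !sumrB -!mulr_suml sumr_const card_ord.
by move: n_neq0 r1_neq0; rewrite -!natr1 => n0 r0; field; rewrite n0 r0.
Qed.

Lemma proj_weight_bounds i : (i < m)%N -> 0 <= a i <= 1.
Proof.
move=> im; have d_gt0 := y_norm_gt0 im.
have Y2_le : r.+1%:R^-1 * Y i ^+ 2 <= Q i.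
  by rewrite ler_pdivrMl ?ltr0n // sqr_sum_le.
have Q_le : Q i <= d i.
  rewrite (big_ord_widen n (fun k => y i k ^+ 2) r_lt_n) [leLHS]big_mkcond /=.
  by apply: ler_sum => k _; case: ifP => // _; exact: sqr_ge0.
apply/andP; split.
  by rewrite subr_ge0 mulrA ler_wpM2r // invr_ge0 ltW.
apply: le_trans (_ : Q i / d i <= 1); last by rewrite ler_pdivrMr // mul1r.
by rewrite gerBl mulr_ge0 ?invr_ge0 // divr_ge0 ?sqr_ge0 // ltW.
Qed.

Lemma trace_le_partial_sum : r%:R / r.+1%:R * \sum_(k < r.+1) L k <= \sum_(i < r) M i.
Proof.
rewrite -trace_proj_weights.
have r1_lt_m : (r.-1 < m)%N by rewrite prednK.
have sum_M : \sum_(i < r) M i = \sum_(i < r.-1) M i + M r.-1.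
  by rewrite -!(big_mkord xpredT) -{1}(prednK r_gt0) big_nat_recr.
have r_pred : r%:R - r.-1%:R = 1 :> R.
  by rewrite -{1}(prednK r_gt0) -natr1 addrAC subrr add0r.
have := sum_bounded_weights_le r1_lt_m M_noninc proj_weight_bounds.
by rewrite sum_proj_weights mul1r mulr1 r_pred mul1r sum_M.
Qed.

Lemma partial_sum_eigen_lower :
  m%:R * \sum_(i < r) L i.+1 + r%:R * L 0 <= n%:R * \sum_(i < r) M i.
Proof.
set T := \sum_(i < r) L i.+1.
have sum_L : \sum_(k < r.+1) L k = L 0 + T by rewrite big_ord_recl.
have T_le : T <= r%:R * L 0.
  apply: le_trans (_ : _ <= \sum_(i < r) L 0) _; last by rewrite sumr_const card_ord mulr_natl.
  apply: ler_sum => i _; apply: (nonincreasing_le L_noninc) => //.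
  exact: leq_trans (ltn_ord i) r_lt_n.
apply: le_trans (ler_wpM2l (ler0n _ n) trace_le_partial_sum).
rewrite sum_L -subr_ge0.
have -> : n%:R * (r%:R / r.+1%:R * (L 0 + T)) - (m%:R * T + r%:R * L 0)
    = (m%:R - r%:R) * (r%:R * L 0 - T) / r.+1%:R.
  by move: r1_neq0; rewrite -!natr1 => ?; field.
by rewrite divr_ge0 ?mulr_ge0 // subr_ge0 ?ler_nat.
Qed.

End PartialSumsOfEigenvalues.

Theorem corollary2p5 (R : realType) (n : nat) (lam mu : nat -> R) :
  (2 <= n)%N ->
  (forall i : nat, (1 <= i)%N -> (i < n)%N -> lam i.+1 <= lam i) ->
  (forall i : nat, (1 <= i)%N -> (i < n.-1)%N -> mu i.+1 <= mu i) ->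
  (\prod_(1 <= j < n.+1) ('X - (lam j)%:P))^`()
    = n%:R *: \prod_(1 <= j < n) ('X - (mu j)%:P) ->
  forall r : nat, (1 <= r)%N -> (r <= n.-1)%N ->
    (n.-1)%:R * (\sum_(1 <= j < r.+1) lam j.+1) + r%:R * lam 1%N
      <= n%:R * (\sum_(1 <= j < r.+1) mu j)
    /\ n%:R * (\sum_(1 <= j < r.+1) mu j)
      <= (n.-1)%:R * (\sum_(1 <= j < r.+1) lam j) + r%:R * lam r.+1.
Proof.
case: n => [|[|m]] // _ lam_noninc mu_noninc q_deriv r r_gt0 r_le.
pose L k := lam k.+1; pose M i := mu i.+1.
have qL_deriv : (\prod_(k < m.+2) ('X - (L k)%:P))^`()
    = m.+2%:R *: \prod_(i < m.+1) ('X - (M i)%:P).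
  by move: q_deriv; rewrite !big_add1 !big_mkord.
have L_noninc k : (k.+1 < m.+2)%N -> L k.+1 <= L k by exact: lam_noninc.
have M_noninc i : (i.+1 < m.+1)%N -> M i.+1 <= M i by exact: mu_noninc.
have y_sum0 := crit_eigvec_sum0 qL_deriv.
have y_eigen i k (_ : (i < m.+1)%N) := @crit_eigvec_eigen _ m.+1 L M i k.
have y_norm_gt0 := crit_eigvec_norm_gt0 qL_deriv; have y_orth := crit_eigvec_orth qL_deriv.
rewrite !big_add1 !big_mkord /=; split.
- exact: (partial_sum_eigen_lower L_noninc M_noninc y_sum0 y_eigen y_norm_gt0 y_orth).
- exact: (partial_sum_eigen_upper L_noninc y_sum0 y_eigen y_norm_gt0 y_orth).
Qed.
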